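(* Let $R$ be a commutative Noetherian ring of finite Krull dimension $d$ such that $R/\mathfrak{m}$ is infinite for every maximal ideal $\mathfrak{m}$ of $R$. Let $R[x_1,\ldots,x_n]$ be a polynomial ring over $R$ and $J \subseteq R[x_1,\ldots,x_n]$ an ideal with $\mathrm{height}(J) \geq d+1$. Then for every integer $0 \leq \ell \leq n$ there exist $r_1,\ldots,r_\ell \in R$ such that either $J + (x_1 - r_1, \ldots, x_\ell - r_\ell) = R[x_1,\ldots,x_n]$, or $\mathrm{height}(J + (x_1 - r_1,\ldots,x_\ell - r_\ell)) \geq d + \ell + 1$ (for $\ell = 0$ the ideal is understood to be $J$). *)

From mathcomp Require Import all_boot all_algebra.
From mathcomp Require Export mpoly.
Set Implicit Arguments. Unset Strict Implicit. Unset Printing Implicit Defensive.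
Import GRing.Theory.
Local Open Scope ring_scope.

Section Ideals.
Variable A : comRingType.

Definition is_ideal (I : A -> Prop) : Prop :=
  I 0 /\ (forall x y, I x -> I y -> I (x + y)) /\ (forall a x, I x -> I (a * x)).

Definition sub_ideal (I K : A -> Prop) : Prop := forall x, I x -> K x.

Definition prime_ideal (P : A -> Prop) : Prop :=
  is_ideal P /\ ~ P 1 /\ (forall a b, P (a * b) -> P a \/ P b).

Definition maximal_ideal (M : A -> Prop) : Prop :=
  is_ideal M /\ ~ M 1 /\
  (forall K, is_ideal K -> sub_ideal M K -> ~ K 1 -> sub_ideal K M).

Definition noetherian : Prop :=
  forall I : nat -> A -> Prop, (forall k, is_ideal (I k)) ->
  (forall k, sub_ideal (I k) (I k.+1)) ->
  exists N, forall k, (N <= k)%N -> sub_ideal (I k) (I N).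

Definition prime_chain (P : nat -> A -> Prop) (k : nat) : Prop :=
  (forall i, (i <= k)%N -> prime_ideal (P i)) /\
  (forall i, (i < k)%N -> sub_ideal (P i) (P i.+1) /\ exists x, P i.+1 x /\ ~ P i x).

Definition krull_dim (d : nat) : Prop :=
  (exists P, prime_chain P d) /\ ~ (exists P, prime_chain P d.+1).

(* height(I) >= k : every prime containing I has height >= k
   (height of the unit ideal is +oo, inf over the empty set) *)
Definition height_ge (I : A -> Prop) (k : nat) : Prop :=
  forall Q, prime_ideal Q -> sub_ideal I Q ->
  exists P, prime_chain P k /\ (forall x, P k x <-> Q x).

Definition infinite_residue (M : A -> Prop) : Prop :=
  forall s : seq A, exists a, forall b, b \in s -> ~ M (a - b).

End Ideals.

(* J + (x_1 - r_1, ..., x_l - r_l) in R[x_1,...,x_n]  (variables indexed 0..n-1) *)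
Definition add_lin_ideal (R : comRingType) (n l : nat) (J : {mpoly R[n]} -> Prop)
  (r : nat -> R) : {mpoly R[n]} -> Prop :=
  fun f => exists (j : {mpoly R[n]}) (c : 'I_n -> {mpoly R[n]}), J j /\
     f = j + \sum_(i < n | (i < l)%N) c i * ('X_i - (r i)%:MP).

From mathcomp Require Import all_boot all_algebra.
From mathcomp Require Import ring.
From Stdlib Require Import Classical IndefiniteDescription.
Set Implicit Arguments. Unset Strict Implicit. Unset Printing Implicit Defensive.
Import GRing.Theory.
Local Open Scope ring_scope.

(* Induction on [l]; each step raises the height by one.  If [I] has height at
   least [h], Noetherianity of [R[x]] (Hilbert's basis theorem) gives finitely
   many primes [P_1, ..., P_k] over [I] such that every prime over [I] contains
   one of them.  Choose [c] in [R] with [x_(l+1) - c] outside every [P_j]: when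
   [P_j] contains some [x_(l+1) - b_j], this amounts to [c - b_j] avoiding a
   maximal ideal [M_j] above the contraction of [P_j], and such a [c] exists by
   the Chinese remainder theorem since all residue fields are infinite.  Then
   every prime over [I + (x_(l+1) - c)] strictly contains some [P_j], so it has
   height at least [h + 1]. *)

Section IdealTheory.
Variable A : comNzRingType.
Implicit Types (I K M : A -> Prop) (a b x : A).

Lemma is_ideal0 I : is_ideal I -> I 0.
Proof. by case. Qed.

Lemma is_idealD I x y : is_ideal I -> I x -> I y -> I (x + y).
Proof. by case=> _ [hD _]; apply: hD. Qed.

Lemma is_idealMl I a x : is_ideal I -> I x -> I (a * x).
Proof. by case=> _ [_ hM]; apply: hM. Qed.

Lemma is_idealMr I a x : is_ideal I -> I x -> I (x * a).
Proof. by rewrite mulrC; apply: is_idealMl. Qed.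

Lemma is_idealN I x : is_ideal I -> I x -> I (- x).
Proof. by rewrite -mulN1r; apply: is_idealMl. Qed.

Lemma is_idealB I x y : is_ideal I -> I x -> I y -> I (x - y).
Proof. by move=> hI hx hy; apply: is_idealD hx (is_idealN hI hy). Qed.

Lemma sub_ideal_chain (I : nat -> A -> Prop) k k' :
  (forall k, sub_ideal (I k) (I k.+1)) -> (k <= k')%N -> sub_ideal (I k) (I k').
Proof.
move=> hI /subnK <-; elim: (k' - k)%N => // m IH x /IH.
by rewrite addSn; apply: hI.
Qed.

Definition ideal_adjoin I a : A -> Prop := fun x => exists i s, I i /\ x = i + s * a.

Lemma is_ideal_adjoin I a : is_ideal I -> is_ideal (ideal_adjoin I a).
Proof.
move=> hI; split; first by exists 0, 0; rewrite mul0r addr0; split=> //; apply: is_ideal0.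
split.
  move=> x y [i [s [hi ->]]] [j [t [hj ->]]]; exists (i + j), (s + t).
  by split; [apply: is_idealD | rewrite mulrDl addrACA].
move=> c x [i [s [hi ->]]]; exists (c * i), (c * s).
by split; [apply: is_idealMl | rewrite mulrDr mulrA].
Qed.

Lemma sub_ideal_adjoin I a : sub_ideal I (ideal_adjoin I a).
Proof. by move=> x hx; exists x, 0; rewrite mul0r addr0. Qed.

Lemma ideal_adjoin_mem I a : is_ideal I -> ideal_adjoin I a a.
Proof. by move=> hI; exists 0, 1; rewrite add0r mul1r; split=> //; apply: is_ideal0. Qed.

Lemma ideal_adjoin_min I K a :
  is_ideal K -> sub_ideal I K -> K a -> sub_ideal (ideal_adjoin I a) K.
Proof.
by move=> hK hIK hKa x [i [s [hi ->]]]; apply: is_idealD (hIK _ hi) (is_idealMl _ hK hKa).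
Qed.

Lemma noetherian_ind (P : (A -> Prop) -> Prop) : noetherian A ->
  (forall I, is_ideal I ->
    (forall K, is_ideal K -> sub_ideal I K -> (exists x, K x /\ ~ I x) -> P K) -> P I) ->
  forall I, is_ideal I -> P I.
Proof.
move=> hN hP I0 hI0; apply: NNPP => nP0.
have [next hnext] : exists next : (A -> Prop) -> A -> Prop, forall I,
    is_ideal I -> ~ P I ->
    [/\ is_ideal (next I), ~ P (next I), sub_ideal I (next I) & exists x, next I x /\ ~ I x].
  apply: (functional_choice (fun I K => is_ideal I -> ~ P I -> [/\ is_ideal K, ~ P K,
                                  sub_ideal I K & exists x, K x /\ ~ I x])) => I.
  case: (classic (is_ideal I /\ ~ P I)) => [[hI nPI]|hI]; last first.
    by exists I => ? ?; case: hI.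
  apply: NNPP => nK; apply: nPI; apply: hP => // K hK hIK hKI.
  by apply: NNPP => nPK; apply: nK; exists K.
pose chain k := iter k next I0.
have bad k : is_ideal (chain k) /\ ~ P (chain k).
  by elim: k => [|k [hk nPk]] //=; have [] := hnext _ hk nPk.
have grow k : sub_ideal (chain k) (chain k.+1) /\ exists x, chain k.+1 x /\ ~ chain k x.
  by have [hk nPk] := bad k; have [] := hnext _ hk nPk.
have [N hNstable] := hN chain (fun k => proj1 (bad k)) (fun k => proj1 (grow k)).
have [_ [x [hx nx]]] := grow N.
by apply/nx/(hNstable N.+1).
Qed.

Lemma ideal_sub_maximal I : noetherian A -> is_ideal I -> ~ I 1 ->
  exists M, maximal_ideal M /\ sub_ideal I M.
Proof.
move=> hN; move: I; apply: noetherian_ind => // I hI IH hI1.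
case: (classic (maximal_ideal I)) => [hmax|nmax]; first by exists I; split=> // ?.
apply: NNPP => nM; apply: nmax; do 2 split => //.
move=> K hK hIK hK1 x hKx; apply: NNPP => nIx; apply: nM.
have [M [hM hKM]] := IH K hK hIK (ex_intro _ x (conj hKx nIx)) hK1.
by exists M; split=> // y /hIK /hKM.
Qed.

Lemma maximal_inv_mod M c : maximal_ideal M -> ~ M c -> exists c', M (1 - c * c').
Proof.
move=> [hM [hM1 hmax]] hc; apply: NNPP => nc'.
have hK1 : ~ ideal_adjoin M c 1.
  by move=> [m [s [hm e]]]; apply: nc'; exists s; rewrite e mulrC addrK.
apply/hc/(hmax _ (is_ideal_adjoin c hM) (@sub_ideal_adjoin M c) hK1).
exact: ideal_adjoin_mem.
Qed.

Lemma maximal_prime M : maximal_ideal M -> prime_ideal M.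
Proof.
move=> hM; have [hMi [hM1 _]] := hM; split=> //; split=> // a b hab.
case: (classic (M a)) => ha; [by left | right].
have [c' hc'] := maximal_inv_mod hM ha.
have -> : b = b * (1 - a * c') + c' * (a * b) by ring.
by apply: is_idealD (is_idealMl _ _ hab) => //; apply: is_idealMl.
Qed.

Definition prime_cover I (Ps : seq (A -> Prop)) : Prop :=
  (forall P, List.In P Ps -> prime_ideal P /\ sub_ideal I P) /\
  (forall Q, prime_ideal Q -> sub_ideal I Q -> exists P, List.In P Ps /\ sub_ideal P Q).

Lemma exists_prime_cover I : noetherian A -> is_ideal I -> exists Ps, prime_cover I Ps.
Proof.
move=> hN; move: I; apply: noetherian_ind => // I hI IH.
case: (classic (I 1)) => hI1.
  by exists [::]; split=> // Q [_ [hQ1 _]] /(_ 1 hI1).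
case: (classic (prime_ideal I)) => hIp.
  exists [:: I]; split; first by move=> P [<-|[]]; split=> // ?.
  by move=> Q _ hIQ; exists I; split=> //; left.
have [a [b [hab ha hb]]] : exists a b, [/\ I (a * b), ~ I a & ~ I b].
  apply: NNPP => nab; apply: hIp; split=> //; split=> // a b hab.
  by apply: NNPP => /not_or_and [ha hb]; apply: nab; exists a, b.
have cover_adjoin c : ~ I c -> exists Ps, prime_cover (ideal_adjoin I c) Ps.
  move=> hc; apply: IH; [exact: is_ideal_adjoin | exact: sub_ideal_adjoin |].
  by exists c; split=> //; apply: ideal_adjoin_mem.
have [[Pa [hPa covPa]] [Pb [hPb covPb]]] := (cover_adjoin a ha, cover_adjoin b hb).
exists (Pa ++ Pb); split.
  move=> P /(List.in_app_or Pa Pb P) [/hPa|/hPb] [hP hsub];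
    by split=> // x /sub_ideal_adjoin /hsub.
move=> Q hQ hIQ; have [hQi [_ hQmul]] := hQ.
have [hQa|hQb] := hQmul a b (hIQ _ hab).
  have [P [hP hPQ]] := covPa Q hQ (ideal_adjoin_min hQi hIQ hQa).
  by exists P; split=> //; apply: List.in_or_app; left.
have [P [hP hPQ]] := covPb Q hQ (ideal_adjoin_min hQi hIQ hQb).
by exists P; split=> //; apply: List.in_or_app; right.
Qed.

Lemma prime_chain_extend (C : nat -> A -> Prop) h Q x :
  prime_chain C h -> prime_ideal Q -> sub_ideal (C h) Q -> Q x -> ~ C h x ->
  prime_chain (fun i => if (i <= h)%N then C i else Q) h.+1.
Proof.
move=> [hCp hCinc] hQ hCQ hQx nCx; split=> [i hi|i].
  by case: ifP => // hih; apply: hCp.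
rewrite ltnS => hih; rewrite hih.
have [hlt|hge] := ltnP i h; first exact: hCinc.
have -> : i = h by apply/eqP; rewrite eqn_leq hih hge.
by split=> //; exists x.
Qed.

Lemma maximal_avoid_common (N : A -> Prop) (I : nat -> A -> Prop) k :
  maximal_ideal N -> (forall i, (i < k)%N -> is_ideal (I i)) ->
  exists c, ~ N c /\ forall i, (i < k)%N -> ~ sub_ideal (I i) N -> I i c.
Proof.
move=> hN; elim: k => [|k IH] hI.
  by exists 1; split=> //; case: hN => _ [].
have [c [nNc hc]] := IH (fun i hi => hI i (ltnW hi)).
case: (classic (sub_ideal (I k) N)) => hIk.
  exists c; split=> // i; rewrite ltnS leq_eqVlt => /orP [/eqP -> //|]; exact: hc.
have [y [hy nNy]] : exists y, I k y /\ ~ N y.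
  by apply: NNPP => ny; apply: hIk => y hy; apply: NNPP => nNy; apply: ny; exists y.
exists (y * c); split; first by case/(maximal_prime hN).2.2.
move=> i; rewrite ltnS leq_eqVlt => /orP [/eqP -> _|hi nsub].
  exact: is_idealMr _ (hI k (ltnSn k)) hy.
exact: is_idealMl _ (hI i (ltnW hi)) (hc i hi nsub).
Qed.

(* A Chinese-remainder choice: [r = r0 + c c' a] agrees with [r0] modulo every
   [M i] not contained in [M k], and with [r0 + a] modulo [M k]. *)
Lemma infinite_residue_avoid (M : nat -> A -> Prop) (b : nat -> A) k :
  (forall i, (i < k)%N -> maximal_ideal (M i)) ->
  (forall i, (i < k)%N -> infinite_residue (M i)) ->
  exists r, forall i, (i < k)%N -> ~ M i (r - b i).
Proof.
elim: k => [|k IH] hM hinf; first by exists 0.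
have [r0 hr0] := IH (fun i hi => hM i (ltnW hi)) (fun i hi => hinf i (ltnW hi)).
have hMk := hM k (ltnSn k).
have [c [nMc hc]] := maximal_avoid_common hMk (fun i hi => (hM i (ltnW hi)).1).
have [c' hc'] := maximal_inv_mod hMk nMc.
have [a ha] := hinf k (ltnSn k) [seq b i - r0 | i <- iota 0 k.+1].
exists (r0 + c * c' * a) => i hi hMi.
case: (classic (sub_ideal (M i) (M k))) => hsub.
  apply: (ha (b i - r0)); first by apply/mapP; exists i; rewrite ?mem_iota.
  have -> : a - (b i - r0) = (r0 + c * c' * a - b i) + (1 - c * c') * a by ring.
  by apply: is_idealD (hsub _ hMi) (is_idealMr _ hMk.1 hc'); case: hMk.
have hik : (i < k)%N.
  by rewrite ltn_neqAle -ltnS hi andbT; apply/eqP => eik; apply: hsub; rewrite eik.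
have hMi_id := (hM i hi).1.
apply: (hr0 i hik).
have -> : r0 - b i = (r0 + c * c' * a - b i) - (c' * a) * c by ring.
exact: is_idealB hMi_id hMi (is_idealMl _ hMi_id (hc i hik hsub)).
Qed.

End IdealTheory.

Lemma is_ideal_preim (S A : comNzRingType) (f : {rmorphism S -> A}) (I : A -> Prop) :
  is_ideal I -> is_ideal (fun s => I (f s)).
Proof.
move=> hI; split; first by rewrite rmorph0; apply: is_ideal0.
split=> [x y hx hy|a x hx]; first by rewrite rmorphD; apply: is_idealD.
by rewrite rmorphM; apply: is_idealMl.
Qed.

Lemma noetherian_surj (S A : comNzRingType) (f : {rmorphism S -> A}) :
  (forall y, exists x, f x = y) -> noetherian S -> noetherian A.
Proof.
move=> f_surj hN I hI hinc.
have [N hNstable] := hN (fun k s => I k (f s)) (fun k => is_ideal_preim f (hI k))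
  (fun k x => hinc k (f x)).
by exists N => k hk y; have [x <-] := f_surj y; apply: hNstable.
Qed.

Section HilbertBasis.
Variable A : comNzRingType.
Implicit Types (I : {poly A} -> Prop) (d : nat).

Definition lead_ideal I d : A -> Prop :=
  fun a => exists f, [/\ I f, (size f <= d.+1)%N & f`_d = a].

Lemma is_ideal_lead I d : is_ideal I -> is_ideal (lead_ideal I d).
Proof.
move=> hI; split.
  by exists 0; rewrite size_poly0 coef0; split=> //; apply: is_ideal0.
split=> [x y [f [hf sf <-]] [g [hg sg <-]]|a x [f [hf sf <-]]].
  exists (f + g); rewrite coefD; split=> //; first exact: is_idealD.
  by apply: leq_trans (size_polyD _ _) _; rewrite geq_max sf sg.
exists (a *: f); rewrite coefZ; split=> //; first by rewrite -mul_polyC; apply: is_idealMl.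
exact: leq_trans (size_scale_leq _ _) sf.
Qed.

Lemma lead_idealSd I d : is_ideal I -> sub_ideal (lead_ideal I d) (lead_ideal I d.+1).
Proof.
move=> hI a [f [hf sf <-]]; exists (f * 'X); rewrite coefMX; split=> //.
  exact: is_idealMr.
by have [->|nz] := eqVneq f 0; rewrite ?mul0r ?size_poly0 // size_mulX.
Qed.

Lemma lead_idealS I I' d : sub_ideal I I' -> sub_ideal (lead_ideal I d) (lead_ideal I' d).
Proof. by move=> hII' a [f [hf sf <-]]; exists f; split=> //; apply: hII'. Qed.

(* Subtracting from [f] an element of [I] with the same leading coefficient
   lowers the degree, so equal leading-coefficient ideals force [I' = I]. *)
Lemma sub_ideal_lead I I' : is_ideal I -> is_ideal I' -> sub_ideal I I' ->
  (forall d, sub_ideal (lead_ideal I' d) (lead_ideal I d)) -> sub_ideal I' I.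
Proof.
move=> hI hI' hII' hlead f; move: {2}(size f) (leqnn (size f)) => s.
elim: s f => [|s IH] f sf hf.
  by move: sf; rewrite leqn0 size_poly_eq0 => /eqP ->; apply: is_ideal0.
have [->|nz] := eqVneq f 0; first exact: is_ideal0.
have sfE : size f = (size f).-1.+1 by rewrite prednK // size_poly_gt0.
move: (size f).-1 sfE => d sfE.
have [g [hg sg gd]] : lead_ideal I d f`_d by apply: hlead; exists f; rewrite sfE.
rewrite -(subrK g f); apply: is_idealD => //; apply: IH; last first.
  by apply: is_idealB => //; apply: hII'.
apply: (@leq_trans d); last by rewrite -ltnS -sfE.
apply/leq_sizeP => j hj; rewrite coefB.
have [<-|ne] := eqVneq d j; first by rewrite gd subrr.
have hdj : (d < j)%N by rewrite ltn_neqAle ne hj.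
by rewrite !nth_default ?subrr // ?sfE // (leq_trans sg).
Qed.

Lemma noetherian_stable_below (L : nat -> nat -> A -> Prop) : noetherian A ->
  (forall k d, is_ideal (L k d)) -> (forall k d, sub_ideal (L k d) (L k.+1 d)) ->
  forall m N0, exists2 N, (N0 <= N)%N &
    forall d k, (d < m)%N -> (N <= k)%N -> sub_ideal (L k d) (L N d).
Proof.
move=> hN hL hinc; elim=> [|m IH] N0; first by exists N0.
have [N hN0 hNstable] := IH N0.
have [Nm hNm] := hN (L^~ m) (hL^~ m) (hinc^~ m).
have mono d := sub_ideal_chain (hinc^~ d).
exists (maxn N Nm) => [|d k]; first by rewrite leq_max hN0.
rewrite ltnS leq_eqVlt => /orP [/eqP ->|hd] hk x.
  by move=> /(hNm k (leq_trans (leq_maxr _ _) hk)); apply: mono; apply: leq_maxr.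
by move=> /(hNstable d k hd (leq_trans (leq_maxl _ _) hk)); apply: mono; apply: leq_maxl.
Qed.

(* The leading-coefficient ideals [L k d] of a chain [I k] stabilise
   uniformly: along the diagonal for [d >= N0], and below it for [d < N0]. *)
Lemma noetherian_poly : noetherian A -> noetherian {poly A}.
Proof.
move=> hN I hI hinc.
pose L k d := lead_ideal (I k) d.
have hL k d : is_ideal (L k d) by apply: is_ideal_lead.
have L_incr k d : sub_ideal (L k d) (L k.+1 d) := lead_idealS (hinc k).
have L_incr_deg k d : sub_ideal (L k d) (L k d.+1) := lead_idealSd (hI k).
have L_mono k k' d e : (k <= k')%N -> (d <= e)%N -> sub_ideal (L k d) (L k' e).
  move=> hk hd x /(sub_ideal_chain (L_incr^~ d) hk).
  exact: sub_ideal_chain (L_incr_deg k') hd x.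
have [N0 hN0] := hN (fun k => L k k) (fun k => hL k k)
  (fun k => L_mono _ _ _ _ (leqnSn k) (leqnSn k)).
have [N hN0N hlow] :=
  noetherian_stable_below hN hL (fun k d => L_mono _ _ _ _ (leqnSn k) (leqnn d)) N0 N0.
exists N => k hk; apply: sub_ideal_lead => //; first exact: sub_ideal_chain.
move=> d; have [hd|hd] := ltnP d N0; first exact: hlow.
move=> x /(L_mono k (maxn k d) d (maxn k d) (leq_maxl _ _) (leq_maxr _ _)).
move=> /(hN0 _ (leq_trans (leq_trans hN0N hk) (leq_maxl _ _))).
exact: L_mono.
Qed.

End HilbertBasis.

Section MpolyNoetherian.
Variable R : comNzRingType.

Lemma mpoly_ring_ind m (P : {mpoly R[m]} -> Prop) :
  (forall c, P c%:MP) -> (forall i, P 'X_i) ->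
  (forall p q, P p -> P q -> P (p + q)) -> (forall p q, P p -> P q -> P (p * q)) ->
  forall p, P p.
Proof.
move=> hC hX hD hM p; rewrite (mpolyE p).
apply: (big_ind P); [by rewrite -mpolyC0 | exact: hD | move=> mm _].
rewrite -mul_mpolyC; apply: (hM) => //; rewrite mpolyXE_id.
apply: (big_ind P); [by rewrite -mpolyC1 | exact: hM | move=> i _].
by elim: (mm i) => [|k IH]; rewrite ?expr0 -?mpolyC1 // exprS; apply: (hM).
Qed.

Definition mpoly_of_poly m : {rmorphism {poly {mpoly R[m]}} -> {mpoly R[m.+1]}} :=
  horner_eval ('X_ord_max : {mpoly R[m.+1]}) \o map_poly (@mwiden m R).

Lemma mpoly_of_poly_surj m : forall p : {mpoly R[m.+1]}, exists q, mpoly_of_poly m q = p.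
Proof.
apply: mpoly_ring_ind.
- move=> c; exists (c%:MP)%:P.
  by rewrite /= map_polyC /= horner_evalE hornerC mwidenC.
- move=> i; have [hi|hi] := ltnP i m.
    exists ('X_(Ordinal hi))%:P; rewrite /= map_polyC /= horner_evalE hornerC.
    by rewrite mwidenX mnmwiden1; congr 'X_[U_(_)]; apply: val_inj.
  exists 'X; rewrite /= map_polyX horner_evalE hornerX.
  congr (mpolyX _ U_(_)); apply: val_inj => /=.
  by apply/eqP; rewrite eqn_leq hi -ltnS ltn_ord.
- by move=> p q [x <-] [y <-]; exists (x + y); rewrite rmorphD.
- by move=> p q [x <-] [y <-]; exists (x * y); rewrite rmorphM.
Qed.

Lemma noetherian_mpoly m : noetherian R -> noetherian {mpoly R[m]}.
Proof.
move=> hN; elim: m => [|m IH].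
  apply: (noetherian_surj (f := @mpolyC 0 R)) hN => p.
  by exists p@_0%MM; rewrite [RHS]nvar0_mpolyC.
exact: noetherian_surj (@mpoly_of_poly_surj m) (noetherian_poly IH).
Qed.

End MpolyNoetherian.

Section LinearSections.
Variables (R : comNzRingType) (n : nat).
Implicit Types (J P : {mpoly R[n]} -> Prop) (r : nat -> R).

Lemma is_ideal_add_lin J l r : is_ideal J -> is_ideal (add_lin_ideal l J r).
Proof.
move=> hJ; split.
  exists 0, (fun _ => 0); split; first exact: is_ideal0.
  by rewrite big1 ?addr0 // => i _; rewrite mul0r.
split=> [x y [j [c [hj ->]]] [j' [c' [hj' ->]]]|a x [j [c [hj ->]]]].
  exists (j + j'), (fun i => c i + c' i); split; first exact: is_idealD.
  by rewrite addrACA -big_split /=; congr (_ + _); apply: eq_bigr => i _; rewrite mulrDl.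
exists (a * j), (fun i => a * c i); split; first exact: is_idealMl.
by rewrite mulrDr mulr_sumr; congr (_ + _); apply: eq_bigr => i _; rewrite mulrA.
Qed.

Lemma sub_add_lin_ideal J l r : sub_ideal J (add_lin_ideal l J r).
Proof.
move=> j hj; exists j, (fun _ => 0); split=> //.
by rewrite big1 ?addr0 // => i _; rewrite mul0r.
Qed.

Lemma add_lin_idealS J l r c :
  sub_ideal (add_lin_ideal l J r) (add_lin_ideal l.+1 J [eta r with l |-> c]).
Proof.
move=> x [j [cs [hj ->]]]; exists j, (fun i : 'I_n => if (i < l)%N then cs i else 0).
split=> //; congr (_ + _); rewrite big_mkcond [RHS]big_mkcond; apply: eq_bigr => i _ /=.
have [hi|hi] := ltnP i l; first by rewrite ltnW // (ltn_eqF hi).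
by rewrite mul0r; case: ifP.
Qed.

Lemma add_lin_ideal_X J l r c (hl : (l < n)%N) : is_ideal J ->
  add_lin_ideal l.+1 J [eta r with l |-> c] ('X_(Ordinal hl) - c%:MP).
Proof.
move=> hJ; exists 0, (fun i : 'I_n => (i == Ordinal hl)%:R); split; first exact: is_ideal0.
rewrite add0r (bigD1 (Ordinal hl)) //= eqxx eqxx mul1r big1 ?addr0 // => i /andP [_].
by move=> /negbTE ->; rewrite mul0r.
Qed.

Hypothesis noethR : noetherian R.

(* If [P] contains some [x_i - b], then [x_i - c] in [P] forces [c - b] into
   the contraction of [P] to [R], hence into a maximal ideal [M] above it. *)
Lemma lin_root_constraint P (i : 'I_n) : is_ideal P -> ~ P 1 ->
  exists M b, maximal_ideal M /\ forall c, ~ M (c - b) -> ~ P ('X_i - c%:MP).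
Proof.
move=> hP hP1; case: (classic (exists b, P ('X_i - b%:MP))) => [[b hb]|nroot].
  have hq : is_ideal (fun a => P a%:MP) := is_ideal_preim (@mpolyC n R) hP.
  have hq1 : ~ P 1%:MP by rewrite mpolyC1.
  have [M [hM hqM]] := ideal_sub_maximal noethR hq hq1.
  exists M, b; split=> // c nMc hc; apply/nMc/hqM.
  have -> : (c - b)%:MP = ('X_i - b%:MP) - ('X_i - c%:MP) by rewrite mpolyCB; ring.
  exact: is_idealB.
have h0 : is_ideal (fun a : R => a = 0).
  split=> //; split=> [x y -> ->|a x ->]; [exact: addr0 | exact: mulr0].
have [M [hM _]] := ideal_sub_maximal noethR h0 (elimN eqP (@oner_neq0 R)).
by exists M, 0; split=> // c _ hc; apply: nroot; exists c.
Qed.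

Lemma lin_roots_constraints (Ps : seq ({mpoly R[n]} -> Prop)) (i : 'I_n) :
  (forall P, List.In P Ps -> is_ideal P /\ ~ P 1) ->
  exists k (M : nat -> R -> Prop) (b : nat -> R),
    (forall j, (j < k)%N -> maximal_ideal (M j)) /\
    forall c, (forall j, (j < k)%N -> ~ M j (c - b j)) ->
      forall P, List.In P Ps -> ~ P ('X_i - c%:MP).
Proof.
elim: Ps => [|P Ps IH] hPs; first by exists 0, (fun _ _ => False), (fun _ => 0).
have [k [M [b [hM hMb]]]] := IH (fun Q hQ => hPs Q (or_intror hQ)).
have [hP hP1] := hPs P (or_introl erefl).
have [M0 [b0 [hM0 hM0b]]] := lin_root_constraint i hP hP1.
exists k.+1, (fun j => if j is j'.+1 then M j' else M0),
  (fun j => if j is j'.+1 then b j' else b0).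
split=> [[|j]|c hc Q [<-|hQ]] //=; first exact: hM.
  exact: hM0b (hc 0%N isT).
by apply: hMb => // j hj; apply: (hc j.+1).
Qed.

End LinearSections.

Lemma height_ge_add_lin_succ (R : comNzRingType) (n : nat) (J : {mpoly R[n]} -> Prop)
    (l : nat) (r : nat -> R) (h : nat) (hl : (l < n)%N) :
  noetherian R -> (forall M : R -> Prop, maximal_ideal M -> infinite_residue M) ->
  is_ideal J -> height_ge (add_lin_ideal l J r) h ->
  exists c, height_ge (add_lin_ideal l.+1 J [eta r with l |-> c]) h.+1.
Proof.
move=> hN hinf hJ hH.
have [Ps [hPs covPs]] :=
  exists_prime_cover (@noetherian_mpoly R n hN) (is_ideal_add_lin l r hJ).
have hPs_proper P : List.In P Ps -> is_ideal P /\ ~ P 1.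
  by move=> /hPs [[hP [hP1 _]] _].
have [k [M [b [hM hMb]]]] := lin_roots_constraints hN (Ordinal hl) hPs_proper.
have [c hc] := infinite_residue_avoid b hM (fun j hj => hinf _ (hM j hj)).
exists c => Q hQ hIQ.
have [P [hP hPQ]] := covPs Q hQ (fun x hx => hIQ x (add_lin_idealS c hx)).
have [hPp hIP] := hPs P hP.
have [C [hC hCP]] := hH P hPp hIP.
exists (fun i => if (i <= h)%N then C i else Q); split; last by move=> x; rewrite ltnn.
apply: prime_chain_extend hC hQ _ (hIQ _ (add_lin_ideal_X r c hl hJ)) _.
  by move=> x /hCP /hPQ.
by move=> /hCP; apply: hMb hc P hP.
Qed.

Theorem lemma2p4 (R : comRingType) (d n : nat) (J : {mpoly R[n]} -> Prop) :
  noetherian R -> krull_dim R d ->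
  (forall M : R -> Prop, maximal_ideal M -> infinite_residue M) ->
  is_ideal J -> height_ge J d.+1 ->
  forall l : nat, (l <= n)%N ->
  exists r : nat -> R,
    add_lin_ideal l J r 1 \/ height_ge (add_lin_ideal l J r) (d + l).+1.
Proof.
move=> hN _ hinf hJ hH l hl.
suff [r hr] : exists r, height_ge (add_lin_ideal l J r) (d + l).+1 by exists r; right.
elim: l hl => [|l IH] hl.
  exists (fun _ => 0); rewrite addn0 => Q hQ hIQ.
  by apply: hH => // x hx; apply/hIQ/sub_add_lin_ideal.
have [r hr] := IH (ltnW hl).
have [c hc] := height_ge_add_lin_succ hl hN hinf hJ hr.
by exists [eta r with l |-> c]; rewrite addnS.
Qed.
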